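(* Let $1\le k\le n-1$ and let $\lambda$ be a Young diagram fitting inside the $k\times(n-k)$ rectangle. Then $$X_\lambda\,\mathbf 1=w_\lambda(\mathbf 1)+\sum_{\varepsilon\in E}f_\varepsilon\,\varepsilon$$ for some rational functions $f_\varepsilon\in\mathbb Q(v)$ each of which has a zero of order $\ge1$ at $v=0$.
   Context: Let $\mathcal H$ be the Hecke algebra of $S_n$ over $\mathbb Q(v)$, generated by $T_1,\dots,T_{n-1}$ with braid relations and $(T_i-v)(T_i+v^{-1})=0$. Let $E$ be the set of sequences of $n$ signs $\pm$ with exactly $k$ pluses; $S_n$ acts on $E$ by permuting positions ($s_i$ swaps entries $i,i+1$). Let $M=\bigoplus_{\varepsilon\in E}\mathbb Q(v)\varepsilon$ with $\mathcal H$-action: $T_i\varepsilon=s_i\varepsilon$ if $(\varepsilon_i,\varepsilon_{i+1})=(+,-)$; $T_i\varepsilon=-v^{-1}\varepsilon$ if $(\varepsilon_i,\varepsilon_{i+1})\in\{(+,+),(-,-)\}$; $T_i\varepsilon=s_i\varepsilon+(v-v^{-1})\varepsilon$ if $(\varepsilon_i,\varepsilon_{i+1})=(-,+)$. Let $\mathbf 1=(+^k,-^{n-k})$. For a Young diagram $\lambda$ with rows $\lambda_1\ge\dots\ge\lambda_\ell>0$ ($\ell\le k$, $\lambda_1\le n-k$) and boxes $(i,j)$, $1\le j\le\lambda_i$: $w_\lambda=P_\ell\cdots P_1\in S_n$ with $P_i=s_{k+\lambda_i-i}s_{k+\lambda_i-i-1}\cdots s_{k+1-i}$; $r_{ij}=\max(r_{i,j+1},r_{i+1,j})+1$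 with $r_{ij}=0$ for $(i,j)\notin\lambda$; $[r]=(v^r-v^{-r})/(v-v^{-1})$; $X_\lambda=Q_\ell\cdots Q_1$ with $Q_i=\prod_{j=\lambda_i}^{1}\bigl(T_{k+j-i}-v^{r_{ij}}/[r_{ij}]\bigr)$, factors ordered from $j=\lambda_i$ (leftmost) to $j=1$ (rightmost). *)

From HB Require Import structures.
From mathcomp Require Import all_boot all_order all_algebra fraction.
Set Implicit Arguments. Unset Strict Implicit. Unset Printing Implicit Defensive.
Import Order.TTheory GRing.Theory Num.Theory.
Local Open Scope ring_scope.

Notation Qv := {fraction {poly rat}}.
Definition v : Qv := tofrac 'X.

Definition vanishes_at0 (f : Qv) : Prop :=
  exists p q : {poly rat}, q.[0] != 0 /\ p.[0] = 0 /\ f = tofrac p / tofrac q.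

(* Sign sequences of length n: true = '+', false = '-'.  Positions are
   1-indexed in the paper; position p corresponds to the ordinal p-1. *)
Notation signs n := {ffun 'I_n -> bool}.

Definition E (n k : nat) : {set signs n} := [set e : signs n | #|[set i | e i]| == k].

Definition sgn n (e : signs n) (p : nat) : bool :=
  [exists j : 'I_n, (val j == p.-1) && e j].

(* s_i swaps the entries at (1-indexed) positions i and i+1 *)
Definition swapnat (i j : nat) : nat :=
  if j == i.-1 then i else if j == i then i.-1 else j.
Definition sact n (i : nat) (e : signs n) : signs n :=
  [ffun j : 'I_n => e (insubd j (swapnat i j))].

(* the module M, with basis the sign sequences (coefficients on non-E
   sequences are forced to be zero in the statement) *)
Notation M n := {ffun signs n -> Qv^o}.
Definition delta n (e : signs n) : M n := [ffun x => (x == e)%:R].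

Definition Tbasis n (i : nat) (e : signs n) : M n :=
  if sgn e i && ~~ sgn e i.+1 then delta (sact i e)
  else if sgn e i == sgn e i.+1 then (- v^-1) *: delta e
  else delta (sact i e) + (v - v^-1) *: delta e.

Definition Tact n (i : nat) (x : M n) : M n :=
  \sum_(e : signs n) x e *: Tbasis i e.

Definition onesq n k : signs n := [ffun j : 'I_n => (val j < k)%N].

(* Young diagram as the list of its row lengths lam = [lam_1; ...; lam_l] *)
Definition young (n k : nat) (lam : seq nat) : bool :=
  [&& sorted geq lam, all (fun x => 0 < x)%N lam, (size lam <= k)%N
    & all (fun x => x <= n - k)%N lam].

(* box (i,j), 1-indexed *)
Definition inbox (lam : seq nat) (i j : nat) : bool :=
  [&& (1 <= i)%N, (i <= size lam)%N, (1 <= j)%N & (j <= nth 0 lam i.-1)%N].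

(* r_{ij} = max(r_{i,j+1}, r_{i+1,j}) + 1 on boxes, 0 off boxes;
   computed with fuel (any path of boxes has length <= |lam|) *)
Fixpoint rfuel (lam : seq nat) (fuel i j : nat) : nat :=
  match fuel with
  | 0 => 0
  | f.+1 => if inbox lam i j then (maxn (rfuel lam f i j.+1) (rfuel lam f i.+1 j)).+1
            else 0
  end.
Definition rbox (lam : seq nat) (i j : nat) : nat := rfuel lam (sumn lam).+1 i j.

Definition qint (r : nat) : Qv := (v ^+ r - v ^- r) / (v - v^-1).

Definition cst (lam : seq nat) (i j : nat) : Qv :=
  v ^+ rbox lam i j / qint (rbox lam i j).

(* Q_i applied to x: factors j = 1 (rightmost, applied first) ... lam_i *)
Definition Qact n k (lam : seq nat) (i : nat) (x : M n) : M n :=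
  foldl (fun y j => Tact (k + j - i) y - cst lam i j *: y) x (iota 1 (nth 0 lam i.-1)).

Definition Xact n k (lam : seq nat) (x : M n) : M n :=
  foldl (fun y i => Qact k lam i y) x (iota 1 (size lam)).

Definition Pact n k (lam : seq nat) (i : nat) (e : signs n) : signs n :=
  foldl (fun y j => sact (k + j - i) y) e (iota 1 (nth 0 lam i.-1)).

Definition wact n k (lam : seq nat) (e : signs n) : signs n :=
  foldl (fun y i => Pact k lam i y) e (iota 1 (size lam)).

From HB Require Import structures.
From mathcomp Require Import all_boot all_order all_algebra fraction fingroup perm.
From mathcomp Require Import ring zify.
Import GRing.Theory.
Local Open Scope ring_scope.

Set Implicit Arguments.
Unset Strict Implicit.
Unset Printing Implicit Defensive.

(* Expand X_lam 1 box by box, rows in order, box (i, j) contributing the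
   factor T_p - v^r / [r] with p = k + j - i and r = r_ij.  The leading term
   runs along the path from 1 to w_lam(1): at each step it has (+, -) at the
   positions p, p + 1, so T_p merely swaps them.  Every other term is an error
   term, and the invariant is that the coefficient of e is divisible by v and
   by v^(d/2), where d is the Hamming distance from e to the leading sequence
   with position q weighted by 2 K_q + 1, K_q being the depth of q: the length
   of the longest chain of remaining, successively overlapping swaps starting
   at q.  A swap costs a power of v (through v^-1 in T_p) only on terms that
   differ from the leading one at p or p + 1, and it lowers the weights there
   by 2.  The constant v^r / [r] vanishes to order 2r - 1, which suffices
   because the swaps of later boxes overlapping that of (i, j) belong to boxes
   with smaller r, so the depths at p, p + 1 after box (i, j) are below r. *)

Definition regular_at0 (f : Qv) : Prop :=
  exists p q : {poly rat}, q.[0] != 0 /\ f = tofrac p / tofrac q.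

Definition vord_ge (m : nat) (f : Qv) : Prop :=
  exists2 h, regular_at0 h & f = v ^+ m * h.

Lemma tofrac_neq0 (q : {poly rat}) : q.[0] != 0 -> tofrac q != 0.
Proof. by apply: contraNneq => /eqP; rewrite tofrac_eq0 => /eqP ->; rewrite horner0. Qed.

Lemma regular_at0_poly (p : {poly rat}) : regular_at0 (tofrac p).
Proof. by exists p, 1; rewrite hornerC oner_eq0 tofrac1 divr1. Qed.

Lemma regular_at0D f g : regular_at0 f -> regular_at0 g -> regular_at0 (f + g).
Proof.
move=> [p [q [q0 ->]]] [p' [q' [q'0 ->]]].
exists (p * q' + p' * q), (q * q'); rewrite hornerM mulf_neq0 //.
by rewrite addf_div ?tofrac_neq0 // tofracD !tofracM.
Qed.

Lemma regular_at0M f g : regular_at0 f -> regular_at0 g -> regular_at0 (f * g).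
Proof.
move=> [p [q [q0 ->]]] [p' [q' [q'0 ->]]].
by exists (p * p'), (q * q'); rewrite hornerM mulf_neq0 // !tofracM mulf_div.
Qed.

Lemma regular_at0N f : regular_at0 f -> regular_at0 (- f).
Proof. by move=> [p [q [q0 ->]]]; exists (- p), q; rewrite tofracN mulNr. Qed.

Section VanishingOrder.
Implicit Types (m : nat) (f g : Qv).

Lemma v_neq0 : v != 0.
Proof. by rewrite tofrac_eq0 polyX_eq0. Qed.

Lemma vord_ge0 m : vord_ge m 0.
Proof. by exists 0; rewrite ?mulr0 // -tofrac0; apply: regular_at0_poly. Qed.

Lemma vord_geD m f g : vord_ge m f -> vord_ge m g -> vord_ge m (f + g).
Proof. by move=> [h ? ->] [h' ? ->]; exists (h + h'); rewrite ?mulrDr //; apply: regular_at0D. Qed.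

Lemma vord_geN m f : vord_ge m f -> vord_ge m (- f).
Proof. by move=> [h ? ->]; exists (- h); rewrite ?mulrN //; apply: regular_at0N. Qed.

Lemma vord_geB m f g : vord_ge m f -> vord_ge m g -> vord_ge m (f - g).
Proof. by move=> hf hg; apply/vord_geD/vord_geN. Qed.

Lemma vord_geW m m' f : (m' <= m)%N -> vord_ge m f -> vord_ge m' f.
Proof.
move=> le_m'm [h hh ->]; exists (v ^+ (m - m') * h); last by rewrite mulrA -exprD subnKC.
by apply: regular_at0M => //; rewrite -tofracXn; apply: regular_at0_poly.
Qed.

Lemma vord_geM m m' f g : vord_ge m f -> vord_ge m' g -> vord_ge (m + m') (f * g).
Proof.
by move=> [h ? ->] [h' ? ->]; exists (h * h'); [apply: regular_at0M | rewrite exprD mulrACA].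
Qed.

Lemma vord_ge_mulVv m f : vord_ge m.+1 f -> vord_ge m (v^-1 * f).
Proof. by move=> [h ? ->]; exists h; rewrite // exprS !mulrA mulVf ?v_neq0 ?mul1r. Qed.

Lemma vord_ge_mulv m f : vord_ge m f -> vord_ge m.+1 (v * f).
Proof. by move=> [h ? ->]; exists h; rewrite // exprS mulrA. Qed.

Lemma vanishes_at0_vord_ge1 f : vord_ge 1 f -> vanishes_at0 f.
Proof.
move=> [h [p [q [q0 ->]]] ->]; exists ('X * p), q; split=> //.
by rewrite hornerM hornerX mul0r; split=> //; rewrite tofracM mulrA.
Qed.

Lemma one_sub_Xn_at0 m : (0 < m)%N -> (1 - 'X^m : {poly rat}).[0] != 0.
Proof.
by move=> m_gt0; rewrite hornerD hornerN hornerXn hornerC expr0n eqn0Ngt m_gt0 subr0 oner_eq0.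
Qed.

Lemma div_qint_factor (F : fieldType) (x y : F) : x != 0 -> y != 0 ->
  1 - x ^+ 2 != 0 -> 1 - y ^+ 2 != 0 ->
  y / ((y - y^-1) / (x - x^-1)) = y * y / x * ((1 - x ^+ 2) / (1 - y ^+ 2)).
Proof.
move=> x0 y0 x2 y2.
have x2' : x * x - 1 != 0 by rewrite -expr2 -oppr_eq0 opprB.
have y2' : y * y - 1 != 0 by rewrite -expr2 -oppr_eq0 opprB.
by field; rewrite y2 x0 x2' y0 y2'.
Qed.

(* [v^r / [r] = v^(2r-1) (1 - v^2) / (1 - v^(2r))] *)
Lemma vord_ge_cst r : (0 < r)%N -> vord_ge (2 * r - 1) (v ^+ r / qint r).
Proof.
move=> r_gt0; have two_r_gt0 : (0 < 2 * r)%N by rewrite muln_gt0.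
exists (tofrac (1 - 'X^2) / tofrac (1 - 'X^(2 * r))).
  by exists (1 - 'X^2), (1 - 'X^(2 * r)); split; first exact: one_sub_Xn_at0.
have := tofrac_neq0 (one_sub_Xn_at0 two_r_gt0).
have := tofrac_neq0 (one_sub_Xn_at0 (isT : (0 < 2)%N)).
rewrite !tofracB tofrac1 !tofracXn -/v mul2n -addnn exprD -expr2 => v2 v2r.
rewrite /qint (div_qint_factor v_neq0 (expf_neq0 _ v_neq0) v2 v2r); congr (_ * _).
by rewrite -exprD -[X in _ / X]expr1 -expfB //; lia.
Qed.

Lemma vord_ge_mulNVv_sub m m' f c :
  vord_ge m.+1 f -> vord_ge m' c -> vord_ge m (f * (- v^-1 - c)).
Proof.
move=> hf hc; rewrite mulrBr mulrN mulrC.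
by apply: vord_geB; [apply/vord_geN/vord_ge_mulVv | apply: vord_geW (vord_geM hf hc); lia].
Qed.

Lemma vord_ge_mul_vBVv_sub m m' f c :
  vord_ge m.+1 f -> vord_ge m' c -> vord_ge m (f * (v - v^-1 - c)).
Proof.
move=> hf hc; rewrite !mulrBr [f * v]mulrC [f * v^-1]mulrC.
apply: vord_geB; last by apply: vord_geW (vord_geM hf hc); lia.
by apply: vord_geB; [apply: vord_geW (vord_ge_mulv hf); lia | apply: vord_ge_mulVv].
Qed.

End VanishingOrder.

Section Vectors.
Variable n : nat.
Implicit Types (e x : signs n) (y z : M n).

Lemma scale_deltaE (a : Qv) e x : (a *: delta e) x = if x == e then a else 0.
Proof. by rewrite !ffunE; case: eqP => _; [exact: mulr1 | exact: mulr0]. Qed.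

Lemma delta_expand z : z = \sum_e z e *: delta e.
Proof.
apply/ffunP => x; rewrite sum_ffunE (eq_bigr (fun e => if e == x then z e else 0)).
  by rewrite -big_mkcond big_pred1_eq.
by move=> e _; rewrite scale_deltaE eq_sym.
Qed.

Lemma Tact_delta i e : Tact i (delta e) = Tbasis i e.
Proof.
rewrite /Tact (bigD1 e) //= ffunE eqxx scale1r big1 ?addr0 // => x /negbTE ne.
by rewrite ffunE ne scale0r.
Qed.

Lemma TactD i y z : Tact i (y + z) = Tact i y + Tact i z.
Proof. by rewrite /Tact -big_split; apply: eq_bigr => e _; rewrite ffunE scalerDl. Qed.

Lemma Tact_subZ_expand i (c : Qv) z :
  Tact i z - c *: z = \sum_e z e *: (Tbasis i e - c *: delta e).
Proof.
rewrite {2}(delta_expand z) scaler_sumr /Tact -sumrB; apply: eq_bigr => e _.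
by rewrite scalerBr !scalerA mulrC.
Qed.

Definition coordwise (P : signs n -> Qv -> Prop) z := forall e, P e (z e).

Variable P : signs n -> Qv -> Prop.
Hypothesis P0 : forall e, P e 0.
Hypothesis PD : forall e a b, P e a -> P e b -> P e (a + b).

Lemma coordwise0 : coordwise P 0.
Proof. by move=> e; rewrite ffunE; apply: P0. Qed.

Lemma coordwiseD y z : coordwise P y -> coordwise P z -> coordwise P (y + z).
Proof. by move=> Py Pz e; rewrite ffunE; apply: PD. Qed.

Lemma coordwise_sum (F : signs n -> M n) :
  (forall e, coordwise P (F e)) -> coordwise P (\sum_e F e).
Proof. by move=> PF; apply: big_ind => //; [exact: coordwise0 | exact: coordwiseD]. Qed.

Lemma coordwise_scale_delta (a : Qv) e : P e a -> coordwise P (a *: delta e).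
Proof. by move=> Pa x; rewrite scale_deltaE; case: eqP => [->|]. Qed.

End Vectors.

Section Signs.
Variable n : nat.
Implicit Types (e g : signs n).

Lemma sgnE e (j : 'I_n) : sgn e j.+1 = e j.
Proof.
apply/existsP/idP => [[j' /andP[/eqP j'j]]|]; last by exists j; rewrite eqxx.
by have -> : j' = j by apply: val_inj.
Qed.

Variable a : 'I_n.
Hypothesis ab_lt : (a.+1 < n)%N.
Local Notation b := (Ordinal ab_lt).

Lemma sact_tperm e : sact a.+1 e = [ffun j => e (tperm a b j)].
Proof.
apply/ffunP => j; rewrite !ffunE /swapnat /=; congr (e _); apply: val_inj.
case: tpermP => [-> | -> | ja jb].
- by rewrite eqxx insubdK.
- by rewrite /= gtn_eqF // eqxx insubdK //; exact: ltn_ord.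
- move: ja jb => /eqP; rewrite -val_eqE => /negbTE -> /eqP; rewrite -val_eqE => /negbTE ->.
  by rewrite insubdK //; exact: ltn_ord.
Qed.

Lemma sact_a e : sact a.+1 e a = e b.
Proof. by rewrite sact_tperm ffunE tpermL. Qed.

Lemma sact_b e : sact a.+1 e b = e a.
Proof. by rewrite sact_tperm ffunE tpermR. Qed.

Lemma sact_off e j : j != a -> j != b -> sact a.+1 e j = e j.
Proof. by move=> ja jb; rewrite sact_tperm ffunE tpermD // eq_sym. Qed.

Lemma sact_in_E k e : e \in E n k -> sact a.+1 e \in E n k.
Proof.
rewrite !inE sact_tperm; congr (_ == _); rewrite -(card_preimset _ (@perm_inj _ (tperm a b))).
by congr #|pred_of_set _|; apply/setP => j; rewrite !inE ffunE.
Qed.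

Lemma a_neq_b : a != b.
Proof. by rewrite -val_eqE /= neq_ltn ltnSn. Qed.

Lemma card_signs e : #|[set j | e j]| = (\sum_j e j)%N.
Proof. by rewrite -sum1_card big_mkcond; apply: eq_bigr => j _; rewrite inE; case: (e j). Qed.

Lemma card_signs_split e :
  #|[set j | e j]| = (e a + e b + \sum_(j | (j != a) && (j != b)) e j)%N.
Proof. by rewrite card_signs (bigD1 a) // (bigD1 b) 1?eq_sym ?a_neq_b //= addnA. Qed.

Lemma E_differ_off k e g : e \in E n k -> g \in E n k -> (e a + e b != g a + g b)%N ->
  exists j, [/\ j != a, j != b & e j != g j].
Proof.
move=> eE gE ne.
case: (pickP (fun j => [&& j != a, j != b & e j != g j])) => [j /and3P[]|same].
  by exists j.
move: eE gE ne; rewrite !inE !card_signs_split.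
rewrite (eq_bigr (fun j => nat_of_bool (g j))) => [|j /andP[ja jb]]; last first.
  by move: (same j); rewrite /= ja jb /= => /negbFE/eqP ->.
by move=> /eqP <- /eqP /addIn ->; rewrite eqxx.
Qed.

End Signs.

Lemma sactE n p (e : signs n) (q : 'I_n) : (0 < p < n)%N ->
  sact p e q = if q.+1 == p then sgn e p.+1 else if q.+1 == p.+1 then sgn e p else e q.
Proof.
case: p => // a /andP[_ ab_lt]; pose a' : 'I_n := Ordinal (ltnW ab_lt).
rewrite (@sact_tperm n a' ab_lt) ffunE.
case: tpermP => [-> | -> | qa qb]; rewrite /= ?eqxx ?eqSS.
- exact/esym/(sgnE e (Ordinal ab_lt)).
- by rewrite gtn_eqF //; exact/esym/(sgnE e a').
- have /negbTE -> : q != a :> nat by apply/eqP => qa'; apply: qa; exact: val_inj.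
  by have /negbTE -> : q != a.+1 :> nat by apply/eqP => qb'; apply: qb; exact: val_inj.
Qed.

Fixpoint depth (ps : seq nat) (q : nat) : nat :=
  if ps is p :: ps' then
    if (q == p) || (q == p.+1) then (maxn (depth ps' p) (depth ps' p.+1)).+1
    else depth ps' q
  else 0.

Section WeightedDistance.
Variables n k : nat.
Implicit Types (ps : seq nat) (e g : signs n) (f c : Qv).

Definition weight ps (j : 'I_n) : nat := (2 * depth ps j.+1).+1.

Definition wdist ps g e : nat := \sum_j weight ps j * (e j != g j).

Definition coeff_ok ps g e f : Prop :=
  [/\ vord_ge 1 f, vord_ge (wdist ps g e %/ 2) f & e \in E n k \/ f = 0].

Lemma coeff_ok0 ps g e : coeff_ok ps g e 0.
Proof. by split; [exact: vord_ge0 | exact: vord_ge0 | right]. Qed.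

Lemma coeff_okD ps g e f f' :
  coeff_ok ps g e f -> coeff_ok ps g e f' -> coeff_ok ps g e (f + f').
Proof.
case=> f1 fd fE [f1' fd' fE']; split; try exact: vord_geD.
by case: fE => [|->]; [left | rewrite add0r].
Qed.

Lemma coordwise_coeff_ok_delta ps g e f :
  coeff_ok ps g e f -> coordwise (coeff_ok ps g) (f *: delta e).
Proof. by apply: coordwise_scale_delta; exact: coeff_ok0. Qed.

Lemma coordwise_coeff_ok_delta2 ps g e e' f f' : coeff_ok ps g e f -> coeff_ok ps g e' f' ->
  coordwise (coeff_ok ps g) (f *: delta e + f' *: delta e').
Proof.
by move=> ok ok'; apply: coordwiseD; [exact: coeff_okD | |]; exact: coordwise_coeff_ok_delta.
Qed.

Variable a : 'I_n.
Hypothesis ab_lt : (a.+1 < n)%N.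
Local Notation b := (Ordinal ab_lt).
Local Notation p := a.+1.
Local Notation K1 ps := (depth ps p).
Local Notation K2 ps := (depth ps p.+1).

Definition wdist_off ps g e : nat :=
  \sum_(j | (j != a) && (j != b)) weight ps j * (e j != g j).

Lemma wdist_split ps g e :
  wdist ps g e = (weight ps a * (e a != g a) + weight ps b * (e b != g b) + wdist_off ps g e)%N.
Proof. by rewrite /wdist (bigD1 a) // (bigD1 b) 1?eq_sym ?a_neq_b //= addnA. Qed.

Lemma wdist_off_cons ps g e : wdist_off (p :: ps) g e = wdist_off ps g e.
Proof.
apply: eq_bigr => j /andP[ja jb]; congr (_ * _)%N; rewrite /weight /=.
by rewrite !eqSS -!val_eqE /= in ja jb *; rewrite (negbTE ja) (negbTE jb).
Qed.

Lemma wdist_off_sactl ps g e : wdist_off ps (sact p g) e = wdist_off ps g e.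
Proof. by apply: eq_bigr => j /andP[ja jb]; rewrite sact_off. Qed.

Lemma wdist_off_sactr ps g e : wdist_off ps g (sact p e) = wdist_off ps g e.
Proof. by apply: eq_bigr => j /andP[ja jb]; rewrite sact_off. Qed.

Lemma wdist_off_gt0 ps g e : e \in E n k -> g \in E n k -> (e a + e b != g a + g b)%N ->
  (0 < wdist_off ps g e)%N.
Proof.
move=> eE gE ne; have [j [ja jb ej]] := E_differ_off eE gE ne.
by rewrite /wdist_off (bigD1 j) /= ?ja ?jb // ej muln1 addn_gt0.
Qed.

Section OnPlusMinus.
Variable g : signs n.
Hypotheses (ga : g a) (gb : ~~ g b).

Lemma wdist_cons ps e : wdist (p :: ps) g e =
  ((2 * maxn (K1 ps) (K2 ps)).+3 * (~~ e a + e b) + wdist_off ps g e)%N.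
Proof.
rewrite wdist_split wdist_off_cons /weight /= !eqxx orbT ga (negbTE gb).
by case: (e a); case: (e b) => /=; lia.
Qed.

Lemma wdist_sact ps e : wdist ps (sact p g) e =
  ((2 * K1 ps).+1 * e a + (2 * K2 ps).+1 * ~~ e b + wdist_off ps g e)%N.
Proof.
rewrite wdist_split wdist_off_sactl sact_a sact_b ga (negbTE gb) /weight /=.
by case: (e a); case: (e b).
Qed.

Section Step.
Variables (ps : seq nat) (c : Qv).
Hypothesis gE : g \in E n k.
Hypothesis c_small : vord_ge (K1 ps + K2 ps + 1) c.

Lemma coeff_ok_start : coeff_ok ps (sact p g) g (- c).
Proof.
split; last by left.
- by apply/vord_geN/(vord_geW _ c_small); lia.
- apply/vord_geN/(vord_geW _ c_small).
  rewrite wdist_sact ga (negbTE gb).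
  have -> : wdist_off ps g g = 0%N by rewrite /wdist_off big1 // => j _; rewrite eqxx muln0.
  by rewrite /=; lia.
Qed.

Variables (e : signs n) (f : Qv).
Hypothesis f_ok : coeff_ok (p :: ps) g e f.

Lemma coeff_ok_same_sign : e a = e b -> coeff_ok ps (sact p g) e (f * (- v^-1 - c)).
Proof.
case: f_ok => f1 fd [eE|->]; last by rewrite mul0r => _; exact: coeff_ok0.
move=> eab; have off_gt0 : (0 < wdist_off ps g e)%N.
  by apply: wdist_off_gt0; rewrite // ga (negbTE gb) eab; case: (e b).
move: fd; rewrite wdist_cons => fd.
split; last by left.
- by apply: vord_ge_mulNVv_sub c_small; apply: vord_geW fd; rewrite eab; case: (e b) => /=; lia.
- apply: vord_ge_mulNVv_sub c_small; apply: vord_geW fd.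
  by rewrite wdist_sact eab; case: (e b) => /=; lia.
Qed.

Lemma coeff_ok_swapped : coeff_ok ps (sact p g) (sact p e) f.
Proof.
case: f_ok => f1 fd fE; split=> //.
- apply: vord_geW fd; rewrite wdist_cons wdist_sact sact_a sact_b wdist_off_sactr.
  by case: (e a); case: (e b) => /=; lia.
- by case: fE => [eE|->]; [left; exact: sact_in_E | right].
Qed.

Lemma coeff_ok_plus_minus : e a -> ~~ e b -> coeff_ok ps (sact p g) e (- (f * c)).
Proof.
move=> ea eb; case: f_ok => f1 fd fE; split.
- by apply/vord_geN/(vord_geW _ (vord_geM f1 c_small)); lia.
- apply/vord_geN/(vord_geW _ (vord_geM fd c_small)).
  by rewrite wdist_cons wdist_sact ea (negbTE eb) /=; lia.
- by case: fE => [|->]; [left | right; rewrite mul0r oppr0].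
Qed.

Lemma coeff_ok_minus_plus : ~~ e a -> e b -> coeff_ok ps (sact p g) e (f * (v - v^-1 - c)).
Proof.
move=> ea eb; case: f_ok => f1 fd [eE|->]; last by rewrite mul0r; exact: coeff_ok0.
move: fd; rewrite wdist_cons (negbTE ea) eb /= => fd.
split; last by left.
- by apply: vord_ge_mul_vBVv_sub c_small; apply: vord_geW fd; lia.
- apply: vord_ge_mul_vBVv_sub c_small; apply: vord_geW fd.
  by rewrite wdist_sact (negbTE ea) eb /=; lia.
Qed.

Lemma coordwise_coeff_ok_Tbasis :
  coordwise (coeff_ok ps (sact p g)) (f *: (Tbasis p e - c *: delta e)).
Proof.
rewrite /Tbasis (sgnE e a) (sgnE e b).
case ea: (e a); case eb: (e b) => /=.
- by rewrite -scalerBl scalerA; apply/coordwise_coeff_ok_delta/coeff_ok_same_sign; rewrite ea eb.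
- rewrite scalerBr scalerA -scaleNr; apply: coordwise_coeff_ok_delta2.
    exact: coeff_ok_swapped.
  by apply: coeff_ok_plus_minus; rewrite ?ea ?eb.
- rewrite -addrA -scalerBl scalerDr scalerA; apply: coordwise_coeff_ok_delta2.
    exact: coeff_ok_swapped.
  by apply: coeff_ok_minus_plus; rewrite ?ea ?eb.
- by rewrite -scalerBl scalerA; apply/coordwise_coeff_ok_delta/coeff_ok_same_sign; rewrite ea eb.
Qed.

End Step.
End OnPlusMinus.
End WeightedDistance.

Section Fold.
Variables n k : nat.
Implicit Types (g : signs n) (z : M n) (ps : seq nat) (st : seq (nat * Qv)).

Definition Xstep z (pc : nat * Qv) : M n := Tact pc.1 z - pc.2 *: z.

Definition sacts g ps : signs n := foldl (fun g p => sact p g) g ps.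

Fixpoint plus_minus_path g ps : Prop :=
  if ps is p :: ps' then
    [/\ (0 < p < n)%N, sgn g p, ~~ sgn g p.+1 & plus_minus_path (sact p g) ps']
  else True.

Fixpoint deep_constants st : Prop :=
  if st is (p, c) :: st' then
    vord_ge (depth (map fst st') p + depth (map fst st') p.+1 + 1) c /\ deep_constants st'
  else True.

Lemma sacts_cat g ps ps' : sacts g (ps ++ ps') = sacts (sacts g ps) ps'.
Proof. exact: foldl_cat. Qed.

Lemma plus_minus_path_cat g ps ps' : plus_minus_path g ps ->
  plus_minus_path (sacts g ps) ps' -> plus_minus_path g (ps ++ ps').
Proof. by elim: ps g => //= p ps IH g [p_range gp gp1 path] path'; split=> //; exact: IH. Qed.

Lemma Xstep_coeff_ok ps g z p c : g \in E n k -> (0 < p < n)%N -> sgn g p -> ~~ sgn g p.+1 ->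
  vord_ge (depth ps p + depth ps p.+1 + 1) c -> coordwise (coeff_ok k (p :: ps) g) z ->
  exists2 z', Xstep (delta g + z) (p, c) = delta (sact p g) + z'
            & coordwise (coeff_ok k ps (sact p g)) z'.
Proof.
case: p => [|a] // gE /andP[_ ab_lt] ga gb c_small z_ok.
pose a' : 'I_n := Ordinal (ltnW ab_lt).
have ga' : g a' by rewrite -(sgnE g a').
have gb' : ~~ g (Ordinal ab_lt) by rewrite -(sgnE g (Ordinal ab_lt)).
exists ((- c) *: delta g + \sum_e z e *: (Tbasis a.+1 e - c *: delta e)).
  rewrite /Xstep /= TactD Tact_delta -Tact_subZ_expand scaleNr scalerDr opprD addrACA -addrA.
  by rewrite /Tbasis ga (negbTE gb).
apply: coordwiseD; [exact: coeff_okD | |].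
  exact/coordwise_coeff_ok_delta/(@coeff_ok_start _ _ a' ab_lt).
apply: coordwise_sum => [e|e|e]; [exact: coeff_ok0 | exact: coeff_okD |].
exact: (@coordwise_coeff_ok_Tbasis _ _ a' ab_lt).
Qed.

Lemma foldl_Xstep_coeff_ok st g z : g \in E n k -> plus_minus_path g (map fst st) ->
  deep_constants st -> coordwise (coeff_ok k (map fst st) g) z ->
  exists2 z', foldl Xstep (delta g + z) st = delta (sacts g (map fst st)) + z'
            & coordwise (coeff_ok k [::] (sacts g (map fst st))) z'.
Proof.
elim: st g z => [|[p c] st IH] g z gE /=; first by exists z.
case=> p_range gp gp1 path [c_small deep] z_ok.
have [z1 -> z1_ok] := Xstep_coeff_ok gE p_range gp gp1 c_small z_ok.
apply: IH => //; case: p p_range {gp gp1 path c_small z_ok z1_ok} => // a /andP[_ ab_lt].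
exact: (@sact_in_E n (Ordinal (ltnW ab_lt))).
Qed.

Lemma coeff_ok_final g z : coordwise (coeff_ok k [::] g) z ->
  (forall e, e \in E n k -> vanishes_at0 (z e)) /\ z = \sum_(e in E n k) z e *: delta e.
Proof.
move=> z_ok; split=> [e _|]; first by case: (z_ok e) => /vanishes_at0_vord_ge1.
rewrite {1}(delta_expand z) (bigID (mem (E n k))) /= [X in _ + X]big1 ?addr0 // => e eE.
by case: (z_ok e) => _ _ [|->]; [rewrite (negbTE eE) | rewrite scale0r].
Qed.

End Fold.

Section YoungPath.
Variables n k : nat.
Variable lam : seq nat.

Local Notation rowlen i := (nth 0%N lam i.-1).

(* [path_signs i j] is [onesq n k] after the swaps of the boxes of the rows
   above [i] and of the first [j - 1] boxes of row [i]: the swaps of row [r]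
   move the [r]-th plus from the right, initially at position [k + 1 - r],
   one step to the right per box. *)
Definition plus_pos i j r : nat :=
  (k + 1 - r + (if r < i then rowlen r else if r == i then j.-1 else 0))%N.

Definition path_signs i j : signs n :=
  [ffun q : 'I_n => has (fun r => q.+1 == plus_pos i j r) (iota 1 k)].

Lemma sgn_path_signs i j q : (0 < q <= n)%N ->
  sgn (path_signs i j) q = has (fun r => q == plus_pos i j r) (iota 1 k).
Proof.
by case: q => // q q_le; rewrite -[q.+1]/(nat_of_ord (Ordinal q_le)).+1 sgnE ffunE.
Qed.

Lemma plus_pos_other_row i j j' r : r != i -> plus_pos i j' r = plus_pos i j r.
Proof. by move=> ri; rewrite /plus_pos (negbTE ri). Qed.

Lemma path_signs_next_row i : path_signs i (rowlen i).+1 = path_signs i.+1 1.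
Proof.
apply/ffunP => q; rewrite !ffunE; apply: eq_in_has => r _ /=; rewrite /plus_pos.
case: (ltngtP r i) => [ri|ri|->].
- by rewrite ltnS ltnW.
- by rewrite ltnS leqNgt ri /= if_same.
- by rewrite ltnSn.
Qed.

Lemma path_signs_start : path_signs 1 1 = onesq n k.
Proof.
have plus_pos1 r : (1 <= r)%N -> plus_pos 1 1 r = (k + 1 - r)%N.
  by move=> r_gt0; rewrite /plus_pos ltnNge r_gt0 /= if_same addn0.
apply/ffunP => q; rewrite !ffunE.
change (has (fun r => q.+1 == plus_pos 1 1 r) (iota 1 k) = (nat_of_ord q < k)%N).
apply/hasP/idP => [[r]|q_lt].
  by rewrite mem_iota => r_in; rewrite plus_pos1 => [/eqP|]; lia.
by exists (k - q)%N; rewrite ?mem_iota ?plus_pos1; [lia | apply/eqP; lia | lia].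
Qed.

Hypothesis lam_young : young n k lam.

Lemma size_young : (size lam <= k)%N.
Proof. by case/and4P: lam_young. Qed.

Lemma rowlen_young r : (1 <= r <= size lam)%N -> (rowlen r <= n - k)%N.
Proof. by move=> r_in; case/and4P: lam_young => _ _ _ /all_nthP; apply; lia. Qed.

Lemma rowlen_antitone r s : (1 <= r)%N -> (r <= s)%N -> (s <= size lam)%N ->
  (rowlen s <= rowlen r)%N.
Proof.
move=> r_gt0 rs s_le; case/and4P: lam_young => sorted_lam _ _ _.
have geq_trans : transitive geq by move=> y x z /= xy yz; exact: leq_trans yz xy.
have := sorted_leq_nth geq_trans leqnn 0%N sorted_lam.
by move/(_ r.-1 s.-1); rewrite !inE; apply; lia.
Qed.

Section Box.
Variables i j : nat.
Hypotheses (i_in : (1 <= i <= size lam)%N) (j_in : (1 <= j <= rowlen i)%N).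
Local Notation p := (k + j - i)%N.

Lemma box_pos_range : (0 < p < n)%N.
Proof. by have := rowlen_young i_in; have := size_young; lia. Qed.

Lemma plus_pos_diag j' : (0 < j')%N -> plus_pos i j' i = (k + j' - i)%N.
Proof. by rewrite /plus_pos ltnn eqxx; have := size_young; lia. Qed.

Lemma plus_pos_other r : (1 <= r <= k)%N -> r != i ->
  (plus_pos i j r < p)%N || (p.+1 < plus_pos i j r)%N.
Proof.
rewrite /plus_pos => r_in; case: (ltngtP r i) => // ri _; last by lia.
by have := rowlen_antitone (_ : 1 <= r)%N (ltnW ri) (proj2 (andP i_in)); lia.
Qed.

Lemma box_sgn_plus : sgn (path_signs i j) p.
Proof.
rewrite sgn_path_signs; last by have := box_pos_range; lia.
apply/hasP; exists i; first by rewrite mem_iota; have := size_young; lia.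
by rewrite plus_pos_diag //; lia.
Qed.

Lemma box_sgn_minus : ~~ sgn (path_signs i j) p.+1.
Proof.
rewrite sgn_path_signs; last by have := box_pos_range; lia.
apply/hasP => -[r]; rewrite mem_iota => r_in /eqP pr.
have [ri|ri] := eqVneq r i; first by move: pr; rewrite ri plus_pos_diag; lia.
by have := plus_pos_other (_ : 1 <= r <= k)%N ri; lia.
Qed.

Lemma sact_path_signs : sact p (path_signs i j) = path_signs i j.+1.
Proof.
have sz := size_young; apply/ffunP => q; rewrite sactE ?box_pos_range // [RHS]ffunE.
have [q_p|q_np] := eqP.
  rewrite (negbTE box_sgn_minus); apply/esym/hasP => -[r]; rewrite mem_iota q_p => r_in /eqP.
  have [->|ri] := eqVneq r i; first by rewrite plus_pos_diag; lia.
  by rewrite (plus_pos_other_row j) //; have := plus_pos_other (_ : 1 <= r <= k)%N ri; lia.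
have [q_p1|q_np1] := eqP.
  rewrite box_sgn_plus; apply/esym/hasP; exists i; first by rewrite mem_iota; lia.
  by rewrite plus_pos_diag // q_p1; apply/eqP; lia.
rewrite ffunE; apply: eq_in_has => r r_in /=.
have [->|ri] := eqVneq r i; last by rewrite (plus_pos_other_row j).
by rewrite !plus_pos_diag //; apply/eqP/eqP; lia.
Qed.

End Box.

End YoungPath.

Section Rbox.
Variables n k : nat.
Variable lam : seq nat.
Hypothesis lam_young : young n k lam.

Local Notation rowlen i := (nth 0%N lam i.-1).

Lemma inboxE i j : inbox lam i j = (1 <= i <= size lam)%N && (1 <= j <= rowlen i)%N.
Proof. by rewrite /inbox; case: (1 <= i)%N; case: (i <= size lam)%N. Qed.

Lemma rowlen_le_first i : (1 <= i <= size lam)%N -> (rowlen i <= rowlen 1)%N.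
Proof. by move=> i_in; apply: (rowlen_antitone lam_young); lia. Qed.

Lemma size_le_sumn (s : seq nat) : all (leq 1) s -> (size s <= sumn s)%N.
Proof. by elim: s => //= x s IH /andP[x_gt0 /IH]; lia. Qed.

(* A bound on the recursion depth of [rfuel] from box [(i, j)], decreasing
   along the recursion and at most [sumn lam] on boxes. *)
Definition fuel_needed i j : nat := (size lam - i + (rowlen 1 - j) + 1)%N.

Lemma fuel_needed_le i j : inbox lam i j -> (fuel_needed i j <= sumn lam)%N.
Proof.
rewrite inboxE /fuel_needed => /andP[i_in j_in]; have := rowlen_le_first i_in.
case/and4P: lam_young => _ lam_pos _ _; case lam_eq: lam lam_pos i_in j_in => [|x l] /=.
  by lia.
by case/andP => _ /size_le_sumn; lia.
Qed.

Lemma rfuel_enough f f' i j : (inbox lam i j -> fuel_needed i j <= f)%N -> (f <= f')%N ->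
  rfuel lam f' i j = rfuel lam f i j.
Proof.
elim: f f' i j => [|f IH] [|f'] i j //= enough le_ff'.
- by case: ifP => // /enough; rewrite /fuel_needed; lia.
case: ifP => // box; congr (maxn _ _).+1; apply: IH => // box'; have := enough box;
  move: box box'; rewrite !inboxE /fuel_needed => /andP[i_in j_in] /andP[i_in' j_in'];
  have := rowlen_le_first i_in; lia.
Qed.

Lemma rbox_rec i j : inbox lam i j ->
  rbox lam i j = (maxn (rbox lam i j.+1) (rbox lam i.+1 j)).+1.
Proof.
move=> box; rewrite {1}/rbox /= box /rbox.
by congr (maxn _ _).+1; apply/esym; apply: rfuel_enough => // box'; apply: fuel_needed_le.
Qed.

Lemma rbox_gt0 i j : inbox lam i j -> (0 < rbox lam i j)%N.
Proof. by move/rbox_rec => ->. Qed.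

Lemma rbox_decreasing i j i' j' : inbox lam i j -> inbox lam i' j' ->
  (i <= i')%N -> (j <= j')%N -> (rbox lam i' j' + (i' - i) + (j' - j) <= rbox lam i j)%N.
Proof.
move=> box box'; have [d le_d] := ubnP (i' - i + (j' - j))%N.
elim: d => // d IH in i j box le_d *; move=> le_ii' le_jj'.
have := rbox_rec box; move: (box) (box'); rewrite !inboxE => /andP[i_in j_in] /andP[i_in' j_in'].
have [lt_jj'|ge_jj'] := ltnP j j'.
  have box1 : inbox lam i j.+1.
    rewrite inboxE i_in /=.
    by have := rowlen_antitone lam_young (_ : 1 <= i)%N le_ii' (proj2 (andP i_in')); lia.
  by have := IH i j.+1 box1 (_ : _ < d)%N le_ii' lt_jj'; lia.
have [lt_ii'|ge_ii'] := ltnP i i'; last first.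
  by move=> _; rewrite (_ : i' = i) 1?(_ : j' = j) ?subnn ?addn0 //; lia.
have box1 : inbox lam i.+1 j.
  rewrite inboxE.
  by have := rowlen_antitone lam_young (_ : 1 <= i.+1)%N lt_ii' (proj2 (andP i_in')); lia.
by have := IH i.+1 j box1 (_ : _ < d)%N lt_ii' le_jj'; lia.
Qed.

End Rbox.

Section Boxes.
Variables n k : nat.
Variable lam : seq nat.

Local Notation rowlen i := (nth 0%N lam i.-1).
Implicit Types (b : nat * nat) (bs : seq (nat * nat)).

Definition row_boxes i : seq (nat * nat) := [seq (i, j) | j <- iota 1 (rowlen i)].

Definition boxes_from m c : seq (nat * nat) := flatten [seq row_boxes i | i <- iota m c].

Lemma boxes_fromS m c : boxes_from m c.+1 = row_boxes m ++ boxes_from m.+1 c.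
Proof. by []. Qed.

Definition box_pos b : nat := (k + b.2 - b.1)%N.

Definition box_step b : nat * Qv := (box_pos b, cst lam b.1 b.2).

Local Notation rb b := (rbox lam b.1 b.2).

Definition swaps_at b q : bool := (q == box_pos b) || (q == (box_pos b).+1).

Definition rbox_drops b b' : bool :=
  (swaps_at b' (box_pos b) || swaps_at b' (box_pos b).+1) ==> (rb b' < rb b)%N.

Lemma mem_boxes_from m c b : b \in boxes_from m c ->
  (m <= b.1 < m + c)%N /\ (1 <= b.2 <= rowlen b.1)%N.
Proof.
case/flattenP => _ /mapP[i + ->] /mapP[j + ->]; rewrite !mem_iota => i_in j_in.
by split=> /=; lia.
Qed.

Definition lex_lt b b' : bool := (b.1 < b'.1)%N || (b.1 == b'.1) && (b.2 < b'.2)%N.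

Lemma pairwise_lex_boxes_from m c : pairwise lex_lt (boxes_from m c).
Proof.
elim: c m => // c IH m; rewrite /boxes_from /= pairwise_cat IH andbT; apply/andP; split.
  apply/allrelP => _ b' /mapP[j _ ->] /mem_boxes_from[/= b'1 _].
  by rewrite /lex_lt /=; apply/orP; left; lia.
have : pairwise ltn (iota 1 (rowlen m)).
  by rewrite -sorted_pairwise ?iota_ltn_sorted //; exact: ltn_trans.
by rewrite pairwise_map; apply: sub_pairwise => j j' /= jj'; rewrite /lex_lt /= eqxx jj' orbT.
Qed.

Lemma inbox_boxes b : b \in boxes_from 1 (size lam) -> inbox lam b.1 b.2.
Proof. by case/mem_boxes_from => b1 b2; rewrite inboxE b2 andbT; lia. Qed.

Hypothesis lam_young : young n k lam.

Lemma rbox_drops_lex b b' : inbox lam b.1 b.2 -> inbox lam b'.1 b'.2 -> lex_lt b b' ->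
  rbox_drops b b'.
Proof.
case: b b' => i j [i' j'] /= box box' lt_bb'; apply/implyP.
have := size_young lam_young; move: (box) (box'); rewrite !inboxE => /andP[i_in _] /andP[i_in' _].
rewrite /swaps_at /box_pos /= => sz near.
have [le_ii' le_jj'] : (i <= i')%N /\ (j <= j')%N.
  by move: lt_bb' near; rewrite /lex_lt /= => /orP[|/andP[/eqP]]; lia.
have := rbox_decreasing lam_young box box' le_ii' le_jj'.
by move: lt_bb'; rewrite /lex_lt /= => /orP[|/andP[/eqP]]; lia.
Qed.

Lemma pairwise_rbox_drops : pairwise rbox_drops (boxes_from 1 (size lam)).
Proof.
apply: (sub_in_pairwise (P := mem (boxes_from 1 (size lam))) (r := lex_lt)).
- by move=> b b' /inbox_boxes box /inbox_boxes box'; exact: rbox_drops_lex.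
- exact/allP.
- exact: pairwise_lex_boxes_from.
Qed.

Lemma depth_boxes_le bs q B : pairwise rbox_drops bs -> all (fun b => 0 < rb b)%N bs ->
  (forall b, b \in bs -> swaps_at b q -> rb b <= B)%N -> (depth (map box_pos bs) q <= B)%N.
Proof.
elim: bs q B => //= b bs IH q B /andP[drops pw] /andP[rb_gt0 pos] le_B.
have tail_le q' : (q' == box_pos b) || (q' == (box_pos b).+1) ->
    (depth (map box_pos bs) q' <= (rb b).-1)%N.
  move=> near; apply: IH => // b' b'_in at_q'; move/allP/(_ b' b'_in): drops.
  by rewrite /rbox_drops; case/orP: near => /eqP <-; rewrite at_q' ?orbT /=; lia.
case: ifP => [at_q | _]; last by apply: IH => // b' b'_in; apply: le_B; rewrite inE b'_in orbT.
have := le_B b (mem_head _ _) at_q.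
have := tail_le (box_pos b); have := tail_le (box_pos b).+1; rewrite !eqxx orbT /=; lia.
Qed.

Lemma deep_constants_boxes bs : pairwise rbox_drops bs ->
  (forall b, b \in bs -> inbox lam b.1 b.2) -> deep_constants (map box_step bs).
Proof.
elim: bs => //= b bs IH /[dup] pw_bbs /andP[drops pw] box; split; last first.
  by apply: IH => // b' b'_in; apply: box; rewrite inE b'_in orbT.
have pos : all (fun b => 0 < rb b)%N (b :: bs) by apply/allP => b' /box /(rbox_gt0 lam_young).
have le_rb b' : b' \in b :: bs -> swaps_at b' (box_pos b) -> (rb b' <= rb b)%N.
  rewrite inE => /predU1P[-> //| b'_in at_b'].
  by move/allP/(_ b' b'_in): drops; rewrite /rbox_drops at_b' /=; lia.
have := @depth_boxes_le (b :: bs) (box_pos b) (rb b) pw_bbs pos le_rb; rewrite /= eqxx /=.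
have -> : map fst (map box_step bs) = map box_pos bs by rewrite -map_comp.
by move=> le_depth; apply: vord_geW (vord_ge_cst (rbox_gt0 lam_young (box b (mem_head _ _)))); lia.
Qed.

End Boxes.

Section BoxPath.
Variables n k : nat.
Variable lam : seq nat.
Hypothesis lam_young : young n k lam.

Local Notation rowlen i := (nth 0%N lam i.-1).
Local Notation path_signs := (path_signs n k lam).
Local Notation box_pos := (box_pos k).

Lemma plus_minus_path_row i j0 c : (1 <= i <= size lam)%N -> (0 < j0)%N ->
  (j0 + c = (rowlen i).+1)%N ->
  plus_minus_path (path_signs i j0) (map box_pos [seq (i, j) | j <- iota j0 c]) /\
  sacts (path_signs i j0) (map box_pos [seq (i, j) | j <- iota j0 c]) = path_signs i (j0 + c).
Proof.
move=> i_in; elim: c j0 => [|c IH] j0 j0_gt0 len /=; first by rewrite addn0.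
have j0_in : (1 <= j0 <= rowlen i)%N by lia.
rewrite /sacts /= (sact_path_signs lam_young i_in j0_in) -/(sacts _ _) -addSnnS.
have [|path ->] := IH j0.+1 isT; first by lia.
split=> //; split=> //.
- exact: (box_pos_range lam_young i_in j0_in).
- exact: (box_sgn_plus lam_young i_in j0_in).
- exact: (box_sgn_minus lam_young i_in j0_in).
Qed.

Lemma plus_minus_path_rows m c : (0 < m)%N -> (m + c <= (size lam).+1)%N ->
  plus_minus_path (path_signs m 1) (map box_pos (boxes_from lam m c)) /\
  sacts (path_signs m 1) (map box_pos (boxes_from lam m c)) = path_signs (m + c) 1.
Proof.
elim: c m => [|c IH] m m_gt0 le_size; first by rewrite addn0.
have m_in : (1 <= m <= size lam)%N by lia.
have [path_m end_m] := plus_minus_path_row m_in (isT : 0 < 1)%N (add1n _).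
rewrite path_signs_next_row in end_m.
have [|path' end'] := IH m.+1 isT; first by lia.
rewrite boxes_fromS map_cat sacts_cat /row_boxes end_m end' addSnnS; split=> //.
by apply: plus_minus_path_cat => //; rewrite end_m.
Qed.

End BoxPath.

Section Foldl.
Variables (T U R : Type).

Lemma foldl_flatten (f : R -> T -> R) x (ss : seq (seq T)) :
  foldl f x (flatten ss) = foldl (foldl f) x ss.
Proof. by elim: ss x => //= s ss IH x; rewrite foldl_cat IH. Qed.

Lemma foldl_map (f : R -> U -> R) (h : T -> U) x s :
  foldl f x (map h s) = foldl (fun y a => f y (h a)) x s.
Proof. by elim: s x => //= a s IH x; rewrite IH. Qed.

Lemma eq_foldl (f g : R -> T -> R) : f =2 g -> forall x s, foldl f x s = foldl g x s.
Proof. by move=> eq_fg x s; elim: s x => //= a s IH x; rewrite eq_fg IH. Qed.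

End Foldl.

Lemma Xact_boxes n k lam (x : M n) :
  Xact k lam x = foldl (@Xstep n) x (map (box_step k lam) (boxes_from lam 1 (size lam))).
Proof.
rewrite map_flatten foldl_flatten -map_comp foldl_map; apply: eq_foldl => y i /=.
by rewrite -map_comp foldl_map.
Qed.

Lemma wact_boxes n k lam (e : signs n) :
  wact k lam e = sacts e (map (box_pos k) (boxes_from lam 1 (size lam))).
Proof.
rewrite /sacts map_flatten foldl_flatten -map_comp foldl_map; apply: eq_foldl => y i /=.
by rewrite -map_comp foldl_map.
Qed.

Lemma onesq_in_E n k : (k <= n)%N -> onesq n k \in E n k.
Proof.
move=> le_kn; rewrite inE; apply/eqP.
have -> : [set j | onesq n k j] = [set widen_ord le_kn i | i : 'I_k].
  apply/setP => j; rewrite !inE ffunE; apply/idP/imsetP => [j_lt|[i _ ->]] /=; last exact: ltn_ord.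
  by exists (Ordinal j_lt) => //; apply: val_inj.
by rewrite card_imset ?card_ord // => i i' /eqP; rewrite -val_eqE /= => /eqP /val_inj.
Qed.

Theorem mainTheorem4 (n k : nat) (lam : seq nat) :
  (1 <= k)%N -> (k <= n - 1)%N -> young n k lam ->
  exists f : signs n -> Qv,
    (forall e, e \in E n k -> vanishes_at0 (f e)) /\
    Xact k lam (delta (onesq n k)) =
      delta (wact k lam (onesq n k)) + \sum_(e in E n k) f e *: delta e.
Proof.
move=> _ le_kn lam_young; set steps := map (box_step k lam) (boxes_from lam 1 (size lam)).
have onesq_E : onesq n k \in E n k by apply: onesq_in_E; lia.
have path : plus_minus_path (onesq n k) (map fst steps).
  rewrite /steps -map_comp -(path_signs_start n k lam).
  by case: (plus_minus_path_rows lam_young (isT : 0 < 1)%N (leqnn _)).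
have deep : deep_constants steps.
  by apply: (deep_constants_boxes lam_young (pairwise_rbox_drops lam_young)) => b /inbox_boxes.
have ok0 : coordwise (coeff_ok k (map fst steps) (onesq n k)) 0.
  by apply: coordwise0; exact: coeff_ok0.
have [z X_eq z_ok] := foldl_Xstep_coeff_ok onesq_E path deep ok0.
have [z_vanish z_E] := coeff_ok_final z_ok.
exists z; split=> //.
by rewrite Xact_boxes -[delta _]addr0 X_eq wact_boxes -map_comp -z_E.
Qed.
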